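(* For $n\ge 0$ let $M_n=\bigoplus_{i\ge 0}C_{n,i}$, where $C_{n,i}=\mathbb{Q}$ for $i<n$ and $C_{n,i}=\mathbb{Q}/\mathbb{Z}$ for $i\ge n$. For $m\le n$ define $\varphi_{mn}:M_n\to M_m$ componentwise: as the identity on components with $i<m$ or $i\ge n$, and as the reduction map $\mathbb{Q}\to\mathbb{Q}/\mathbb{Z}$ on components with $m\le i<n$. Then each $M_n$ is an injective $\mathbb{Z}$-module, each $\varphi_{mn}$ is surjective, the inverse limit $M$ of the system $\cdots\to M_2\to M_1\to M_0$ is isomorphic to the subgroup of $\mathbb{Q}^\omega$ consisting of sequences all but finitely many of whose terms lie in $\mathbb{Z}$, and $M$ is not an injective $\mathbb{Z}$-module.
   Context: $\mathbb{Q}^\omega$ denotes the direct product of countably many copies of $\mathbb{Q}$. For $\mathbb{Z}$-modules, injective is equivalent to divisible. *)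

From HB Require Import structures.
From mathcomp Require Import all_boot all_order all_algebra.
Set Implicit Arguments. Unset Strict Implicit. Unset Printing Implicit Defensive.
Import Order.TTheory GRing.Theory Num.Theory.
Local Open Scope ring_scope.

(* An element of M_n = (+)_{i>=0} C_{n,i}  (C_{n,i} = Q for i < n,
   C_{n,i} = Q/Z for i >= n) is represented by a finitely supported sequence
   of rationals s : seq rat, whose i-th term (nth 0 s i) is a representative
   in Q of the i-th component.  Two representatives denote the same element of
   M_n iff they agree on components i < n and differ by an integer on the
   components i >= n. *)

Definition comp (s : seq rat) (i : nat) : rat := nth 0 s i.

Definition Meq (n : nat) (s t : seq rat) : Prop :=
  forall i : nat,
    if (i < n)%N then comp s i = comp t i
    else (comp s i - comp t i) \is a Num.int.

Definition Madd (s t : seq rat) : seq rat :=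
  mkseq (fun i => comp s i + comp t i) (maxn (size s) (size t)).
Definition Mzero : seq rat := [::].
Definition Mnmul (k : nat) (s : seq rat) : seq rat := map (fun q => q *+ k) s.

(* Injective Z-module = divisible Z-module (standing convention of the
   paper's context): every element is divisible by every positive integer. *)
Definition injective_M (n : nat) : Prop :=
  forall (x : seq rat) (k : nat), (0 < k)%N ->
    exists y : seq rat, Meq n (Mnmul k y) x.

(* On representatives in Q
   this is the identity map (the class of s in M_n goes to the class of s
   in M_m). *)
Definition phi (m n : nat) (s : seq rat) : seq rat := s.

Definition in_lim (x : nat -> seq rat) : Prop :=
  forall m n : nat, (m <= n)%N -> Meq m (phi m n (x n)) (x m).
Definition lim_eq (x y : nat -> seq rat) : Prop := forall n, Meq n (x n) (y n).
Definition lim_add (x y : nat -> seq rat) : nat -> seq rat :=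
  fun n => Madd (x n) (y n).
Definition lim_nmul (k : nat) (x : nat -> seq rat) : nat -> seq rat :=
  fun n => Mnmul k (x n).

Definition injective_lim : Prop :=
  forall (x : nat -> seq rat) (k : nat), in_lim x -> (0 < k)%N ->
    exists y, in_lim y /\ lim_eq (lim_nmul k y) x.

Definition ev_int (f : nat -> rat) : Prop :=
  exists N : nat, forall i : nat, (N <= i)%N -> f i \is a Num.int.

Definition lim_iso_ev_int (F : (nat -> seq rat) -> (nat -> rat)) : Prop :=
  [/\ forall x, in_lim x -> ev_int (F x),
      forall x y, in_lim x -> in_lim y -> lim_eq x y -> F x = F y,
      forall x y, in_lim x -> in_lim y ->
        F (lim_add x y) = (fun i => F x i + F y i),
      forall x y, in_lim x -> in_lim y -> F x = F y -> lim_eq x y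
    & forall f, ev_int f -> exists2 x, in_lim x & F x = f].

From Pilot Require Import Defs.
From HB Require Import structures.
From mathcomp Require Import all_boot all_order all_algebra.
From Stdlib Require Import FunctionalExtensionality.
Import Order.TTheory GRing.Theory Num.Theory.

(** Divisibility and surjectivity are immediate on rational representatives.
    For the limit, the i-th component of a compatible family is a genuine
    rational at every level n > i, and these rationals agree, while at level
    0 all but finitely many components vanish; reading off the components at
    level i+1 therefore identifies M with the eventually integral sequences.
    Under this identification the constant sequence 1 would have half
    (1/2, 1/2, ...), which is not eventually integral, so M is not divisible. *)

Local Open Scope ring_scope.

(* [comp] is shadowed by ssrfun's function composition. *)
Local Notation comp := Pilot.Defs.comp.

Lemma comp_Madd (s t : seq rat) (i : nat) :
  comp (Madd s t) i = comp s i + comp t i.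
Proof.
rewrite /comp /Madd; case: (ltnP i (maxn (size s) (size t))) => hi.
  by rewrite nth_mkseq.
rewrite !nth_default ?addr0 ?size_mkseq //.
  by apply: leq_trans hi; rewrite leq_maxr.
by apply: leq_trans hi; rewrite leq_maxl.
Qed.

Lemma comp_Mnmul (k : nat) (s : seq rat) (i : nat) :
  comp (Mnmul k s) i = comp s i *+ k.
Proof.
rewrite /comp /Mnmul; case: (ltnP i (size s)) => hi.
  by rewrite (nth_map 0).
by rewrite !nth_default ?size_map // mul0rn.
Qed.

Lemma comp_mkseq (f : nat -> rat) (n i : nat) :
  comp (mkseq f n) i = if (i < n)%N then f i else 0.
Proof.
rewrite /comp; case: ifP => hi; first by rewrite nth_mkseq.
by rewrite nth_default // size_mkseq leqNgt hi.
Qed.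

Lemma comp_default (s : seq rat) (i : nat) : (size s <= i)%N -> comp s i = 0.
Proof. exact: nth_default. Qed.

Lemma comp_eq_Meq (n : nat) (s t : seq rat) :
  (forall i, comp s i = comp t i) -> Meq n s t.
Proof. by move=> est i; rewrite est subrr; case: ifP. Qed.

Lemma M_injective (n : nat) : injective_M n.
Proof.
move=> x k k_gt0; exists (map (fun q => q / k%:R) x).
apply: comp_eq_Meq => i; rewrite comp_Mnmul /comp.
case: (ltnP i (size x)) => hi; last by rewrite !nth_default ?size_map // mul0rn.
by rewrite (nth_map 0) // -(mulr_natr (_ / _)) divfK // pnatr_eq0 -lt0n.
Qed.

Lemma phi_surjective (m n : nat) (y : seq rat) :
  exists x : seq rat, Meq m (phi m n x) y.
Proof. by exists y; exact: comp_eq_Meq. Qed.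

Lemma in_lim_comp_eq {x : nat -> seq rat} (x_lim : in_lim x) {m n i : nat} :
  (m <= n)%N -> (i < m)%N -> comp (x n) i = comp (x m) i.
Proof. by move=> le_mn lt_im; have := x_lim m n le_mn i; rewrite lt_im. Qed.

Lemma in_lim_comp_int {x : nat -> seq rat} (x_lim : in_lim x) {m n i : nat} :
  (m <= n)%N -> (m <= i)%N -> comp (x n) i - comp (x m) i \is a Num.int.
Proof. by move=> le_mn le_mi; have := x_lim m n le_mn i; rewrite ltnNge le_mi. Qed.

Definition seq_of_lim (x : nat -> seq rat) : nat -> rat :=
  fun i => comp (x i.+1) i.

(* The terms beyond [maxn n N] are integers sitting on Q/Z components of M_n,
   so dropping them gives a finite representative of the right class. *)
Definition lim_of_seq (N : nat) (f : nat -> rat) : nat -> seq rat :=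
  fun n => mkseq f (maxn n N).

Lemma ev_int_seq_of_lim {x : nat -> seq rat} : in_lim x -> ev_int (seq_of_lim x).
Proof.
move=> x_lim; exists (size (x 0%N)) => i hi.
have := in_lim_comp_int x_lim (leq0n i.+1) (leq0n i).
by rewrite (@comp_default (x 0%N)) // subr0.
Qed.

Lemma seq_of_lim_eq {x y : nat -> seq rat} :
  lim_eq x y -> seq_of_lim x = seq_of_lim y.
Proof.
by move=> exy; apply: functional_extensionality => i; have := exy i.+1 i; rewrite ltnSn.
Qed.

Lemma seq_of_lim_add (x y : nat -> seq rat) :
  seq_of_lim (lim_add x y) = (fun i => seq_of_lim x i + seq_of_lim y i).
Proof. by apply: functional_extensionality => i; rewrite /seq_of_lim comp_Madd. Qed.

Lemma seq_of_lim_nmul (k : nat) (x : nat -> seq rat) :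
  seq_of_lim (lim_nmul k x) = (fun i => seq_of_lim x i *+ k).
Proof. by apply: functional_extensionality => i; rewrite /seq_of_lim comp_Mnmul. Qed.

Lemma seq_of_lim_inj (x y : nat -> seq rat) : in_lim x -> in_lim y ->
  seq_of_lim x = seq_of_lim y -> lim_eq x y.
Proof.
move=> x_lim y_lim exy n i.
have {}exy : comp (x i.+1) i = comp (y i.+1) i by have := congr1 (@^~ i) exy.
case: ifP => lt_in.
  by rewrite (in_lim_comp_eq x_lim lt_in (ltnSn i)) (in_lim_comp_eq y_lim lt_in (ltnSn i)).
have le_ni : (n <= i)%N by rewrite leqNgt lt_in.
have dx := in_lim_comp_int x_lim (leqW le_ni) le_ni.
have dy := in_lim_comp_int y_lim (leqW le_ni) le_ni.
have -> : comp (x n) i - comp (y n) i =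
    (comp (y i.+1) i - comp (y n) i) - (comp (x i.+1) i - comp (x n) i).
  by rewrite exy opprB [RHS]addrC addrA subrK.
exact: rpredB.
Qed.

Lemma in_lim_of_seq (N : nat) (f : nat -> rat) :
  (forall i, (N <= i)%N -> f i \is a Num.int) -> in_lim (lim_of_seq N f).
Proof.
move=> f_int m n le_mn i; rewrite /phi /lim_of_seq !comp_mkseq.
have le_mn' : (maxn m N <= maxn n N)%N by rewrite geq_max !leq_max le_mn leqnn orbT.
case: ifP => lt_im.
  have lt_imN : (i < maxn m N)%N by rewrite leq_max lt_im.
  by rewrite lt_imN (leq_trans lt_imN le_mn').
case: (ltnP i (maxn m N)) => [lt_imN | le_mNi].
  by rewrite (leq_trans lt_imN le_mn') subrr.
case: ifP => _; last by rewrite subrr.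
by rewrite subr0 f_int // (leq_trans (leq_maxr m N) le_mNi).
Qed.

Lemma seq_of_lim_of_seq (N : nat) (f : nat -> rat) :
  seq_of_lim (lim_of_seq N f) = f.
Proof.
apply: functional_extensionality => i.
by rewrite /seq_of_lim /lim_of_seq comp_mkseq leq_max ltnSn.
Qed.

Lemma lim_iso_ev_int_seq_of_lim : lim_iso_ev_int seq_of_lim.
Proof.
split.
- by move=> x; exact: ev_int_seq_of_lim.
- by move=> x y _ _; exact: seq_of_lim_eq.
- by move=> x y _ _; exact: seq_of_lim_add.
- exact: seq_of_lim_inj.
- move=> f [N f_int]; exists (lim_of_seq N f); first exact: in_lim_of_seq.
  exact: seq_of_lim_of_seq.
Qed.

Lemma not_injective_lim : ~ injective_lim.
Proof.
move=> divisible.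
have [|y [y_lim two_y]] := divisible (lim_of_seq 0 (fun=> 1)) 2%N _ isT.
  by apply: in_lim_of_seq => i _; exact: rpred1.
have [N y_int] := ev_int_seq_of_lim y_lim.
have := congr1 (@^~ N) (seq_of_lim_eq two_y).
rewrite seq_of_lim_nmul seq_of_lim_of_seq => two_yN.
have yN : seq_of_lim y N = 2%:R^-1.
  by rewrite -[LHS](@mulfK _ 2%:R) // mulr_natr two_yN mul1r.
by move: (y_int N (leqnn N)); rewrite yN.
Qed.

Theorem mainTheorem10 :
  [/\ (forall n : nat, injective_M n),
      (forall m n : nat, (m <= n)%N ->
         forall y : seq rat, exists x : seq rat, Meq m (phi m n x) y),
      (exists F, lim_iso_ev_int F)
    & ~ injective_lim].
Proof.
split.
- exact: M_injective.
- by move=> m n _; exact: phi_surjective.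
- by exists seq_of_lim; exact: lim_iso_ev_int_seq_of_lim.
- exact: not_injective_lim.
Qed.
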